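(* There is an injective algebra homomorphism $$\Theta:\ \mathsf{H}\longrightarrow \mathbb{C}[y_1^{\pm1},\ldots,y_n^{\pm1}]\#_\alpha G$$ such that, for all $i\in\{1,\ldots,n\}$, $$\Theta(x_i)=y_i-\left(\frac{\zeta t_i}{\zeta-1}\right)y_{i+1}^{-1}g_i,\qquad \Theta(g_i)=g_i$$ (indices modulo $n$, so $y_{n+1}=y_1$).
   Context: Fix integers $n\ge 3$ and $\ell\ge 2$, and let $\zeta$ be a primitive $\ell$-th root of unity. All subscripts are taken modulo $n$ (e.g. $x_{n+1}=x_1$). Let $V=\mathbb{C}^n$ with standard basis $x_1,\ldots,x_n$, and let $G$ be the group of all diagonal matrices $g\in SL_n(\mathbb{C})$ with $g^\ell=1$; $G$ acts on $V$ and hence on the tensor algebra $TV$. For $i=1,\ldots,n$ let $g_i\in G$ be given by $g_i(x_i)=\zeta x_i$, $g_i(x_{i+1})=\zeta^{-1}x_{i+1}$, $g_i(x_j)=x_j$ otherwise; then $g_1,\ldots,g_{n-1}$ freely generate $G\cong(\mathbb{Z}/\ell\mathbb{Z})^{n-1}$ and $g_n=g_1^{-1}\cdots g_{n-1}^{-1}$. Define the 2-cocycle $\alpha$ by $\alpha(g_1^{i_1}\cdots g_{n-1}^{i_{n-1}},g_1^{j_1}\cdots g_{n-1}^{j_{n-1}})=\zeta^{-i_1j_2-i_2j_3-\cdots-i_{n-2}j_{n-1}}$. For an algebra $E$ with $G$-action, $E\#_\alpha G$ is $E\otimes\mathbb{C}G$ with product $(r\otimes g)(s\otimes h)=\alpha(g,h)\,r\,(g\cdot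 s)\otimes gh$; the product of $g,h\in G$ in it is written $g*h=\alpha(g,h)gh$. Let $t=(t_1,\ldots,t_n)\in\mathbb{C}^n$. $\mathsf{H}$ is the quotient of $TV\#_\alpha G$ by the relations $x_ix_{i+1}-x_{i+1}x_i=t_ig_i$ for all $i$, and $x_ix_j-x_jx_i=0$ for all $i,j\in\{1,\ldots,n\}$ with $|i-j|\notin\{1,n-1\}$. The group $G$ acts on the Laurent polynomial algebra $\mathbb{C}[y_1^{\pm1},\ldots,y_n^{\pm1}]$ by $g_i\cdot y_1^{p_1}\cdots y_n^{p_n}=\zeta^{p_i-p_{i+1}}y_1^{p_1}\cdots y_n^{p_n}$ for $i=1,\ldots,n-1$ and $p\in\mathbb{Z}^n$. *)

From HB Require Import structures.
From mathcomp Require Import all_boot all_order all_algebra all_field.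
Set Implicit Arguments. Unset Strict Implicit. Unset Printing Implicit Defensive.
Import Order.TTheory GRing.Theory Num.Theory.
Local Open Scope ring_scope.

(* Conventions (0-based): the paper's x_1..x_n are x_0..x_{n-1} indexed by 'I_n;
   the paper's generators g_1..g_{n-1} of G are indexed by 'I_n.-1.
   An element g = g_1^{i_1} ... g_{n-1}^{i_{n-1}} of G is represented by its
   coordinate vector (i_1,...,i_{n-1}) in (Z/l)^{n-1}; the group law is
   coordinatewise addition. *)

Section Defs.
Variables (C : numClosedFieldType) (n l : nat) (zeta : C).

Definition G := {ffun 'I_n.-1 -> 'Z_l}.

(* zeta^z for z in Z/l (well defined since zeta^l = 1) *)
Definition zpow (z : 'Z_l) : C := zeta ^+ (nat_of_ord z).

(* i_{j+1}(g) for 0-based j; 0 outside 0..n-2 *)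
Definition crd (g : G) (j : nat) : 'Z_l := oapp g 0 (insub j).

(* g_i, 0-based i : 'I_n ; the last one is g_n = g_1^{-1}...g_{n-1}^{-1} *)
Definition gen (i : 'I_n) : G :=
  if (i < n.-1)%N then [ffun k : 'I_n.-1 => ((k : nat) == i)%:R]
  else [ffun _ => -1].

(* scalar by which g acts on x_j (0-based j) : diagonal entry of g *)
Definition eig (g : G) (j : nat) : C :=
  zpow (crd g j - (if j is j'.+1 then crd g j' else 0)).

Definition alpha (g h : G) : C :=
  zpow (- \sum_(k < n.-2) crd g k * crd h k.+1).

(* basis: (word in x's, group element) = x_{w_1}...x_{w_k} # g *)
Definition SKey := (seq 'I_n * G)%type.
Definition S := seq (C * SKey).

Definition coefS (a : S) (k : SKey) : C := \sum_(x <- a | x.2 == k) x.1.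
Definition eqS (a b : S) : Prop := forall k, coefS a k = coefS b k.

Definition chi (g : G) (w : seq 'I_n) : C := \prod_(j <- w) eig g j.

Definition mulS (a b : S) : S :=
  [seq (x.1 * y.1 * alpha x.2.2 y.2.2 * chi x.2.2 y.2.1,
        (x.2.1 ++ y.2.1, x.2.2 + y.2.2)) | x <- a, y <- b].
Definition scaleS (c : C) (a : S) : S := [seq (c * x.1, x.2) | x <- a].
Definition oneS : S := [:: (1, ([::], 0))].
Definition xS (i : 'I_n) : S := [:: (1, ([:: i], 0))].
Definition gS (g : G) : S := [:: (1, ([::], g))].

(* the defining relations of H (as elements of TV #_alpha G) *)
Definition rels (t : 'I_n -> C) : seq S :=
  [seq mulS (xS i) (xS (ordS i)) ++ scaleS (-1) (mulS (xS (ordS i)) (xS i))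
        ++ scaleS (- t i) (gS (gen i)) | i <- enum 'I_n]
  ++ [seq mulS (xS p.1) (xS p.2) ++ scaleS (-1) (mulS (xS p.2) (xS p.1))
        | p <- enum [pred p : 'I_n * 'I_n |
             let d := `|(p.1 : int) - (p.2 : int)|%N in (d != 1%N) && (d != n.-1)]].

Definition inIdeal (t : 'I_n -> C) (a : S) : Prop :=
  exists s : seq (S * S * S),
    (forall x, x \in s -> x.1.2 \in rels t) /\
    eqS a (flatten [seq mulS (mulS x.1.1 x.1.2) x.2 | x <- s]).

(* basis: (exponent vector p in Z^n, group element) = y^p # g *)
Definition Zn := {ffun 'I_n -> int}.
Definition TKey := (Zn * G)%type.
Definition T := seq (C * TKey).

Definition coefT (a : T) (k : TKey) : C := \sum_(x <- a | x.2 == k) x.1.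
Definition eqT (a b : T) : Prop := forall k, coefT a k = coefT b k.

Definition pat (p : Zn) (j : nat) : int := oapp p 0 (insub j).

(* action of g = prod g_k^{i_k} on y^p : prod zeta^{i_k (p_k - p_{k+1})} *)
Definition yact (g : G) (p : Zn) : C :=
  zpow (\sum_(k < n.-1) crd g k * (pat p k - pat p k.+1)%:~R).

Definition mulT (a b : T) : T :=
  [seq (x.1 * y.1 * alpha x.2.2 y.2.2 * yact x.2.2 y.2.1,
        (x.2.1 + y.2.1, x.2.2 + y.2.2)) | x <- a, y <- b].
Definition scaleT (c : C) (a : T) : T := [seq (c * x.1, x.2) | x <- a].
Definition oneT : T := [:: (1, (0, 0))].
Definition gT (g : G) : T := [:: (1, (0, g))].
Definition ey (i : 'I_n) : Zn := [ffun k => ((k == i) : nat)%:Z].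

Definition thetaX (t : 'I_n -> C) (i : 'I_n) : T :=
  [:: (1, (ey i, 0)); (- (zeta * t i / (zeta - 1)), (- ey (ordS i), gen i))].

End Defs.

(* Theta is defined on words, Theta(x_{i1} ... x_{ik} g) := Theta(x_{i1}) ... Theta(x_{ik}) g, and
   extended linearly. It is multiplicative because g Theta(x_j) = (g . x_j / x_j) Theta(x_j) g holds
   in the target, mirroring the defining relation of the smash product; on exponents of zeta this
   is a linear identity in Z/l between the cocycle, the action on y and the weight of g on x_j.
   A direct computation shows that Theta kills the defining relations of H.
   For injectivity, the relations rewrite every element modulo the ideal as a combination of sorted
   words x_{i1} ... x_{ik} g (i1 <= ... <= ik), by induction on length and number of inversions.
   Since Theta(x_{i1} ... x_{ik} g) = y_{i1} ... y_{ik} g + terms of total y-degree < k, the images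
   of distinct sorted words are linearly independent, so the kernel is exactly the ideal. *)

From HB Require Import structures.
From mathcomp Require Import all_boot all_order all_algebra all_field.
From mathcomp Require Import ring zify.
Import Order.TTheory GRing.Theory Num.Theory.
Local Open Scope ring_scope.
Set Implicit Arguments. Unset Strict Implicit. Unset Printing Implicit Defensive.

(* Elements of both algebras are lists of (coefficient, basis key) with repetitions; [lin a F]
   pairs [a] with a functional on keys, and two lists have the same coefficients iff all these
   pairings agree ([leqvP]). *)
Section LinearCombinations.
Variable R : comNzRingType.

Definition lin {K : Type} (a : seq (R * K)) (F : K -> R) : R :=
  \sum_(x <- a) x.1 * F x.2.
Definition leqv {K : Type} (a b : seq (R * K)) := forall F, lin a F = lin b F.

Lemma lin_nil K F : lin (@nil (R * K)) F = 0.
Proof. by rewrite /lin big_nil. Qed.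
Lemma lin1 K c (k : K) F : lin [:: (c, k)] F = c * F k.
Proof. by rewrite /lin big_cons big_nil addr0. Qed.
Lemma lin_cons K (x : R * K) a F : lin (x :: a) F = x.1 * F x.2 + lin a F.
Proof. by rewrite /lin big_cons. Qed.
Lemma lin_cat K (a b : seq (R * K)) F : lin (a ++ b) F = lin a F + lin b F.
Proof. by rewrite /lin big_cat. Qed.
Lemma eq_lin K (a : seq (R * K)) (F G : K -> R) : F =1 G -> lin a F = lin a G.
Proof. by move=> e; apply: eq_bigr => x _; rewrite e. Qed.
Lemma linZ K (a : seq (R * K)) c (F : K -> R) :
  lin a (fun k => c * F k) = c * lin a F.
Proof. rewrite /lin mulr_sumr; apply: eq_bigr => x _; ring. Qed.
Lemma lin0 K (a : seq (R * K)) : lin a (fun _ : K => 0) = 0.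
Proof. by rewrite /lin big1 // => x _; rewrite mulr0. Qed.
Lemma lin_scale K c (a : seq (R * K)) F :
  lin [seq (c * x.1, x.2) | x <- a] F = c * lin a F.
Proof. by rewrite /lin big_map mulr_sumr; apply: eq_bigr => x _ /=; ring. Qed.
Lemma lin_map K K' (phi : K -> R) (h : K -> K') (a : seq (R * K)) F :
  lin [seq (x.1 * phi x.2, h x.2) | x <- a] F = lin a (fun k => phi k * F (h k)).
Proof. by rewrite /lin big_map; apply: eq_bigr => x _ /=; rewrite mulrA. Qed.
Lemma exchange_lin K K' (a : seq (R * K)) (b : seq (R * K')) (G : K -> K' -> R) :
  lin a (fun k => lin b (G k)) = lin b (fun k' => lin a (fun k => G k k')).
Proof.
rewrite /lin; under eq_bigr do rewrite mulr_sumr.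
rewrite exchange_big; apply: eq_bigr => y _; rewrite mulr_sumr.
by apply: eq_bigr => x _; ring.
Qed.
Lemma lin_flatten K K' (f : K' -> seq (R * K)) (a : seq K') F :
  lin (flatten (map f a)) F = \sum_(x <- a) lin (f x) F.
Proof. by rewrite /lin big_flatten /= big_map. Qed.
Lemma lin_allpairs K A B (f : A -> B -> R * K) a b F :
  lin [seq f x y | x <- a, y <- b] F =
  \sum_(x <- a) \sum_(y <- b) (f x y).1 * F (f x y).2.
Proof. by rewrite /lin big_allpairs_dep. Qed.

Definition coef {K : eqType} (a : seq (R * K)) k := \sum_(x <- a | x.2 == k) x.1.

Lemma coef_lin (K : eqType) (a : seq (R * K)) k :
  coef a k = lin a (fun k' => (k' == k)%:R).
Proof.
rewrite /coef /lin big_mkcond; apply: eq_bigr => x _.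
by case: (x.2 == k); rewrite ?mulr1 ?mulr0.
Qed.

Lemma lin_coef (K : eqType) (a : seq (R * K)) (L : seq K) F : uniq L ->
  (forall x, x \in a -> x.2 \in L) -> lin a F = \sum_(k <- L) coef a k * F k.
Proof.
move=> uL aL; rewrite /coef; under eq_bigr do rewrite big_distrl.
rewrite (exchange_big_dep predT) //= /lin big_seq [RHS]big_seq.
apply: eq_bigr => x xa.
rewrite -big_filter (@eq_filter _ _ (pred1 x.2)); last by move=> k /=; rewrite eq_sym.
by rewrite filter_pred1_uniq ?aL // big_cons big_nil addr0.
Qed.

Lemma leqvP (K : eqType) (a b : seq (R * K)) :
  (forall k, coef a k = coef b k) <-> leqv a b.
Proof.
split=> [e F|e k]; last by rewrite !coef_lin e.
have uL := undup_uniq (map snd (a ++ b)).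
rewrite (lin_coef F uL) ?(lin_coef F uL (a:=b)).
- by apply: eq_bigr => k _; rewrite e.
- by move=> x xb; rewrite mem_undup map_f // mem_cat xb orbT.
- by move=> x xa; rewrite mem_undup map_f // mem_cat xa.
Qed.

End LinearCombinations.

Lemma exists_argmax (T : eqType) (f : T -> nat) (L : seq T) : L != [::] ->
  exists2 x, x \in L & forall y, y \in L -> (f y <= f x)%N.
Proof.
elim: L => // x [|x' L] IH _.
  by exists x => [|y]; rewrite ?mem_head // inE => /eqP ->.
have [z zL hz] := IH isT.
have [hxz|hzx] := leqP (f x) (f z).
  by exists z => [|y]; rewrite inE ?zL ?orbT // => /orP [/eqP ->|/hz].
exists x => [|y]; rewrite ?mem_head // inE => /orP [/eqP -> //|/hz hy].
exact: leq_trans hy (ltnW hzx).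
Qed.

Section Words.
Variable n : nat.

Definition sortedw (w : seq 'I_n) := sorted (fun a b : 'I_n => (a <= b)%N) w.

Fixpoint inversions (w : seq 'I_n) : nat :=
  if w is x :: w' then (count (fun y : 'I_n => (y < x)%N) w' + inversions w')%N else 0%N.

Lemma inversions_swap u (a b : 'I_n) v : (b < a)%N ->
  inversions (u ++ a :: b :: v) = (inversions (u ++ b :: a :: v)).+1.
Proof.
move=> h; elim: u => [|x u IH] /=.
  by rewrite h ltnNge ltnW //=; lia.
by rewrite IH !count_cat /=; lia.
Qed.

Lemma unsorted_descent (w : seq 'I_n) : ~~ sortedw w ->
  exists u a b v, w = u ++ a :: b :: v /\ (b < a)%N.
Proof.
elim: w => [|x w IH] //; case: w IH => [|y w] IH //.
rewrite /sortedw /=; case: (leqP x y) => hxy /= hp; last by exists [::], x, y, w.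
have [u [a [b [v [-> h]]]]] := IH hp.
by exists (x :: u), a, b, v.
Qed.

End Words.

Lemma ordS_val n (i : 'I_n) : (ordS i : nat) = if (i < n.-1)%N then i.+1 else 0%N.
Proof.
have := ltn_ord i; rewrite /=; case: ifP => h hi; first by rewrite modn_small //; lia.
have -> : i.+1 = n by lia.
exact: modnn.
Qed.

Lemma ordS_neq n (i : 'I_n) : (1 < n)%N -> ordS i != i.
Proof.
move=> hn; apply/eqP => /(congr1 (@nat_of_ord n)); rewrite ordS_val.
by have := ltn_ord i; case: ifP => ?; lia.
Qed.

Lemma ordS2_neq n (i : 'I_n) : (2 < n)%N -> ordS (ordS i) != i.
Proof.
move=> hn; apply/eqP => /(congr1 (@nat_of_ord n)); rewrite !ordS_val.
have := ltn_ord i; case: (ltnP i n.-1) => h1 /=; case: ifP => ?; lia.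
Qed.

(** * Exponents of zeta *)

(* [alpha g h], [yact g p] and [eig g j] are [zeta] raised to [- alpha_exp g h], [yact_exp g p]
   and [eig_exp g j]; these exponents are additive in each argument. *)
Section Exponents.
Variables m l : nat.
Local Notation n := m.+3.
Local Notation GG := (G n l).

Definition alpha_exp (g h : GG) : 'Z_l := \sum_(k < n.-2) crd g k * crd h k.+1.
Definition yact_exp (g : GG) (p : Zn n) : 'Z_l :=
  \sum_(k < n.-1) crd g k * (pat p k - pat p k.+1)%:~R.
Definition eig_exp (g : GG) (j : nat) : 'Z_l :=
  crd g j - (if j is j'.+1 then crd g j' else 0).

Lemma crd_out (g : GG) j : (n.-1 <= j)%N -> crd g j = 0.
Proof. by move=> h; rewrite /crd insubN // -leqNgt. Qed.
Lemma crdD (g h : GG) j : crd (g + h) j = crd g j + crd h j.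
Proof. by rewrite /crd; case: insubP => [k _ _|_] /=; rewrite ?ffunE ?addr0. Qed.
Lemma crd0 j : crd (0 : GG) j = 0.
Proof. by rewrite /crd; case: insubP => [k _ _|_] /=; rewrite ?ffunE. Qed.

Lemma crd_gen (j : 'I_n) k : crd (gen l j) k =
  if (k < n.-1)%N then (if (j < n.-1)%N then (k == j)%:R else -1) else 0.
Proof.
rewrite /crd /gen; case: insubP => [k' hk <-|hk] /=; last by move/negbTE: hk => /= ->.
by rewrite (ltn_ord k'); case: ifP => _; rewrite ffunE.
Qed.

Lemma patD (p q : Zn n) k : pat (p + q) k = pat p k + pat q k.
Proof. by rewrite /pat; case: insubP => [k' _ _|_] /=; rewrite ?ffunE. Qed.
Lemma patN (p : Zn n) k : pat (- p) k = - pat p k.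
Proof. by rewrite /pat; case: insubP => [k' _ _|_] /=; rewrite ?ffunE ?oppr0. Qed.
Lemma pat0 k : pat (0 : Zn n) k = 0.
Proof. by rewrite /pat; case: insubP => [k' _ _|_] /=; rewrite ?ffunE. Qed.
Lemma pat_ey (j : 'I_n) k : pat (ey j) k = (k == j)%:R.
Proof.
rewrite /pat; case: insubP => [k' _ <-|hk] /=; first by rewrite ffunE natz.
by case: eqP => // e; move: hk; rewrite e ltn_ord.
Qed.

Lemma alpha_expDl g h k : alpha_exp (g + h) k = alpha_exp g k + alpha_exp h k.
Proof. by rewrite /alpha_exp -big_split; apply: eq_bigr => i _; rewrite crdD mulrDl. Qed.
Lemma alpha_expDr g h k : alpha_exp k (g + h) = alpha_exp k g + alpha_exp k h.
Proof. by rewrite /alpha_exp -big_split; apply: eq_bigr => i _; rewrite crdD mulrDr. Qed.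
Lemma alpha_exp0l g : alpha_exp 0 g = 0.
Proof. by rewrite /alpha_exp big1 // => i _; rewrite crd0 mul0r. Qed.
Lemma alpha_exp0r g : alpha_exp g 0 = 0.
Proof. by rewrite /alpha_exp big1 // => i _; rewrite crd0 mulr0. Qed.

Lemma yact_expDl g h p : yact_exp (g + h) p = yact_exp g p + yact_exp h p.
Proof. by rewrite /yact_exp -big_split; apply: eq_bigr => i _; rewrite crdD mulrDl. Qed.
Lemma yact_expDr g p q : yact_exp g (p + q) = yact_exp g p + yact_exp g q.
Proof.
rewrite /yact_exp -big_split; apply: eq_bigr => i _; rewrite !patD /=.
by rewrite !(intrD, intrB); ring.
Qed.
Lemma yact_expN g p : yact_exp g (- p) = - yact_exp g p.
Proof.
rewrite /yact_exp -sumrN; apply: eq_bigr => i _; rewrite !patN /=.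
by rewrite !(intrD, intrB, intrN); ring.
Qed.
Lemma yact_exp0l p : yact_exp 0 p = 0.
Proof. by rewrite /yact_exp big1 // => i _; rewrite crd0 mul0r. Qed.
Lemma yact_exp0r g : yact_exp g 0 = 0.
Proof. by rewrite /yact_exp big1 // => i _; rewrite !pat0 subr0 mulr0. Qed.

Lemma yact_exp_ey g (j : 'I_n) : yact_exp g (ey j) = eig_exp g j.
Proof.
rewrite /yact_exp /eig_exp.
under eq_bigr do rewrite !pat_ey !natz intrB -!pmulrn !mulrb mulrBr.
rewrite sumrB.
under eq_bigr do rewrite (fun_if (GRing.mul _)) mulr1 mulr0.
rewrite -!big_mkcond !big_ord1_eq; congr (_ - _).
  by case: ifP => // h; rewrite crd_out // leqNgt h.
case: (nat_of_ord j) (ltn_ord j) => [|j'] hj.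
  by rewrite big1 // => i _; rewrite mulr0.
under eq_bigr do rewrite (fun_if (GRing.mul _)) mulr1 mulr0 eqSS.
by rewrite -big_mkcond big_ord1_eq; move: hj; rewrite /= !ltnS => ->.
Qed.


Lemma eig_exp_gen (i k : 'I_n) :
  eig_exp (gen l i) k = (k == i)%:R - (k == ordS i)%:R.
Proof.
rewrite /eig_exp !crd_gen -[k == ordS i]/((k : nat) == ordS i) ordS_val.
rewrite -[k == i]/((k : nat) == i).
case: k => [[|k] hk] /=; case: i => [i hi] /=; rewrite ?crd_gen /= ?mulrb;
  repeat case: ifP => ? /=; first [by exfalso; lia | ring | idtac].
Qed.

Lemma alpha_exp_gen_r (g : GG) (j : 'I_n) : (j < n.-1)%N ->
  alpha_exp g (gen l j) = if (j : nat) is j'.+1 then crd g j' else 0.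
Proof.
move=> /= hj; rewrite /alpha_exp.
under eq_bigr => k _ do rewrite crd_gen /= ltnS (ltn_ord k) hj mulrb.
under eq_bigr do rewrite (fun_if (GRing.mul _)) mulr1 mulr0.
case: (nat_of_ord j) hj => [|j'] /= hj; first by rewrite big1.
under eq_bigr do rewrite eqSS.
by rewrite -big_mkcond big_ord1_eq -ltnS hj.
Qed.

Lemma alpha_exp_gen_l (g : GG) (j : 'I_n) : (j < n.-1)%N ->
  alpha_exp (gen l j) g = crd g j.+1.
Proof.
move=> /= hj; rewrite /alpha_exp.
have E (k : 'I_n.-2) :
    crd (gen l j) k * crd g k.+1 = if (k : nat) == j then crd g j.+1 else 0.
  have hk : (k < m.+2)%N by have := ltn_ord k; rewrite /=; lia.
  rewrite crd_gen /= hk hj mulrb.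
  by case: eqP => [->|]; rewrite ?mul1r ?mul0r.
under eq_bigr do rewrite E.
rewrite -big_mkcond (big_ord1_eq _ (fun=> crd g j.+1)); case: ifP => // h.
by rewrite crd_out //; move: h => /= h; lia.
Qed.

Lemma alpha_exp_gen_last_r (g : GG) (j : 'I_n) : (j : nat) = n.-1 ->
  alpha_exp g (gen l j) = - \sum_(k < n.-2) crd g k.
Proof.
move=> hj; rewrite /alpha_exp -sumrN; apply: eq_bigr => k _.
by rewrite crd_gen /= hj ltnS (ltn_ord k) ltnn mulrN1.
Qed.

Lemma alpha_exp_gen_last_l (g : GG) (j : 'I_n) : (j : nat) = n.-1 ->
  alpha_exp (gen l j) g = - \sum_(k < n.-2) crd g k.+1.
Proof.
move=> hj; rewrite /alpha_exp -sumrN; apply: eq_bigr => k _.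
have hk : (k < m.+2)%N by have := ltn_ord k; rewrite /=; lia.
by rewrite crd_gen /= hj hk ltnn mulN1r.
Qed.

(* The exponent form of  g * y_{j+1}^-1 g_j = eig g j * y_{j+1}^-1 g_j * g. *)
Lemma commute_exp_gen (g : GG) (j : 'I_n) :
  - alpha_exp g (gen l j) - yact_exp g (ey (ordS j)) =
  eig_exp g j - alpha_exp (gen l j) g.
Proof.
rewrite yact_exp_ey /eig_exp ordS_val.
have [hj|hj] : (j < n.-1)%N \/ (j : nat) = n.-1 by have := ltn_ord j; lia.
  rewrite hj alpha_exp_gen_r // alpha_exp_gen_l //.
  by case: (nat_of_ord j) => [|j'] /=; ring.
rewrite hj ltnn alpha_exp_gen_last_r // alpha_exp_gen_last_l //= (@crd_out g m.+2) //.
rewrite big_ord_recl [in RHS]big_ord_recr /=.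
under eq_bigr do rewrite /bump /= add1n.
ring.
Qed.

End Exponents.

Section Theta.
Variables (C : numClosedFieldType) (m l : nat) (zeta : C) (t : 'I_(m.+3) -> C).
Hypothesis hl : (1 < l)%N.
Hypothesis hz : l.-primitive_root zeta.
Local Notation n := m.+3.
Local Notation GG := (G n l).
Local Notation TT := (T C n l).
Local Notation zp := (@zpow C l zeta).
Local Notation M := (@mulT C n l zeta).
Local Notation al := (@alpha C n l zeta).
Local Notation ya := (@yact C n l zeta).
Local Notation ei := (@eig C n l zeta).
Local Notation SS := (S C n l).
Local Notation X j := (thetaX l zeta t j).
Local Notation cc j := (zeta * t j / (zeta - 1)).

Lemma zpowD (a b : 'Z_l) : zp (a + b) = zp a * zp b.
Proof. by rewrite /zpow /= [E in (_ %% E)%N](Zp_cast hl) prim_expr_mod // exprD. Qed.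
Lemma zpow0 : zp 0 = 1.
Proof. by rewrite /zpow /= expr0. Qed.
Lemma zeta_neq0 : zeta != 0.
Proof. by rewrite (prim_root_eq0 hz) -lt0n (prim_order_gt0 hz). Qed.
Lemma zeta_neq1 : zeta != 1.
Proof. by rewrite -(prim_order_dvd hz 1) dvdn1; case: l hl => [|[]]. Qed.

Lemma zpowN1 : zp (-1) = zeta^-1.
Proof.
apply: (mulIf zeta_neq0); rewrite (mulVf zeta_neq0) -[E in _ * E]expr1 -[zeta ^+ 1]/(zp 1).
by rewrite -zpowD addNr zpow0.
Qed.

Lemma alpha0l h : al 0 h = 1.
Proof. by rewrite /alpha -/(alpha_exp _ _) alpha_exp0l oppr0 zpow0. Qed.
Lemma alpha0r h : al h 0 = 1.
Proof. by rewrite /alpha -/(alpha_exp _ _) alpha_exp0r oppr0 zpow0. Qed.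
Lemma yact0l p : ya 0 p = 1.
Proof. by rewrite /yact -/(yact_exp _ _) yact_exp0l zpow0. Qed.
Lemma yact0r g : ya g 0 = 1.
Proof. by rewrite /yact -/(yact_exp _ _) yact_exp0r zpow0. Qed.
Lemma yactDl g h p : ya (g + h) p = ya g p * ya h p.
Proof. by rewrite /yact -!/(yact_exp _ _) yact_expDl zpowD. Qed.
Lemma yactDr g p q : ya g (p + q) = ya g p * ya g q.
Proof. by rewrite /yact -!/(yact_exp _ _) yact_expDr zpowD. Qed.
Lemma yact_ey g (j : 'I_n) : ya g (ey j) = ei g j.
Proof. by rewrite /yact -/(yact_exp _ _) yact_exp_ey. Qed.

Lemma alpha_cocycle g h k : al g h * al (g + h) k = al h k * al g (h + k).
Proof.
rewrite /alpha -!/(alpha_exp _ _) -!zpowD alpha_expDl alpha_expDr.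
by congr (zp _); ring.
Qed.

Lemma commute_gen_coef g (j : 'I_n) :
  al g (gen l j) * ya g (- ey (ordS j)) = ei g j * al (gen l j) g.
Proof.
rewrite /alpha /yact /eig -!/(alpha_exp _ _) -/(yact_exp _ _) yact_expN -!zpowD.
by rewrite -(commute_exp_gen g j); congr (zp _); ring.
Qed.

Lemma lin_mulT (a b : TT) F : lin (M a b) F =
  lin a (fun kx => lin b (fun ky =>
    al kx.2 ky.2 * ya kx.2 ky.1 * F (kx.1 + ky.1, kx.2 + ky.2))).
Proof.
rewrite /mulT lin_allpairs /lin; apply: eq_bigr => x _; rewrite mulr_sumr.
by apply: eq_bigr => y _ /=; ring.
Qed.

Lemma lin_scaleT c (a : TT) F : lin (scaleT c a) F = c * lin a F.
Proof. exact: lin_scale. Qed.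

Lemma mulT_congrl (a a' b : TT) : leqv a a' -> leqv (M a b) (M a' b).
Proof. by move=> e F; rewrite !lin_mulT e. Qed.
Lemma mulT_congrr (a b b' : TT) : leqv b b' -> leqv (M a b) (M a b').
Proof. by move=> e F; rewrite !lin_mulT; apply: eq_lin => kx; rewrite e. Qed.

Lemma mulTA (a b c : TT) : leqv (M (M a b) c) (M a (M b c)).
Proof.
move=> F; rewrite !lin_mulT; apply: eq_lin => kx; rewrite lin_mulT; apply: eq_lin => ky.
rewrite -linZ; apply: eq_lin => kz /=.
rewrite !addrA yactDl yactDr.
transitivity ((al kx.2 ky.2 * al (kx.2 + ky.2) kz.2) * ya kx.2 ky.1 * ya kx.2 kz.1 *
  ya ky.2 kz.1 * F (kx.1 + ky.1 + kz.1, kx.2 + ky.2 + kz.2)); first by ring.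
by rewrite alpha_cocycle; ring.
Qed.

Lemma mulTZl c (a b : TT) : leqv (M (scaleT c a) b) (scaleT c (M a b)).
Proof. by move=> F; rewrite lin_scaleT !lin_mulT lin_scaleT. Qed.
Lemma mulTZr c (a b : TT) : leqv (M a (scaleT c b)) (scaleT c (M a b)).
Proof.
move=> F; rewrite lin_scaleT !lin_mulT -linZ; apply: eq_lin => kx.
by rewrite lin_scaleT -!linZ; apply: eq_lin => ky; ring.
Qed.

Lemma lin_thetaX (j : 'I_n) F :
  lin (X j) F = F (ey j, 0) - cc j * F (- ey (ordS j), gen l j).
Proof. by rewrite /lin !big_cons big_nil /=; ring. Qed.

Lemma gT_thetaX_comm g (j : 'I_n) :
  leqv (M (gT C g) (X j)) (scaleT (ei g j) (M (X j) (gT C g))).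
Proof.
move=> F; rewrite lin_scaleT !lin_mulT lin1 !lin_thetaX /= !lin1.
rewrite !alpha0l !alpha0r !yact0l !yact0r !add0r !addr0 yact_ey [gen l j + g]addrC.
transitivity (ei g j * F (ey j, g) - cc j *
  (al g (gen l j) * ya g (- ey (ordS j))) * F (- ey (ordS j), g + gen l j)); first by ring.
by rewrite commute_gen_coef; ring.
Qed.

(** * The map Theta *)

Definition theta_key (k : SKey n l) : TT :=
  foldr (fun i acc => M (X i) acc) (gT C k.2) k.1.
Definition theta (a : SS) : TT := flatten [seq scaleT x.1 (theta_key x.2) | x <- a].

Lemma theta_key_cons j w h : theta_key (j :: w, h) = M (X j) (theta_key (w, h)).
Proof. by []. Qed.

Lemma lin_theta a F : lin (theta a) F = lin a (fun k => lin (theta_key k) F).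
Proof. by rewrite /theta lin_flatten; apply: eq_bigr => x _; rewrite lin_scaleT. Qed.

Lemma theta_cat a b : theta (a ++ b) = theta a ++ theta b.
Proof. by rewrite /theta map_cat flatten_cat. Qed.

Lemma lin_scaleS c (a : SS) F : lin (scaleS c a) F = c * lin a F.
Proof. exact: lin_scale. Qed.

Lemma theta_scale c a : leqv (theta (scaleS c a)) (scaleT c (theta a)).
Proof. by move=> F; rewrite lin_scaleT !lin_theta lin_scaleS. Qed.

Lemma gT_theta_key g h w :
  leqv (M (gT C g) (theta_key (w, h)))
       (scaleT (al g h * chi zeta g w) (theta_key (w, g + h))).
Proof.
elim: w => [|j w IH] F.
  by rewrite lin_scaleT lin_mulT /= !lin1 /= add0r yact0r /chi big_nil; ring.
rewrite !theta_key_cons -mulTA (mulT_congrl _ (gT_thetaX_comm g j)) mulTZl.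
rewrite !lin_scaleT mulTA (mulT_congrr _ IH) mulTZr lin_scaleT /chi big_cons.
by ring.
Qed.

Lemma theta_key_mul w w' g h :
  leqv (M (theta_key (w, g)) (theta_key (w', h)))
       (scaleT (al g h * chi zeta g w') (theta_key (w ++ w', g + h))).
Proof.
elim: w => [|i w IH] F; first exact: gT_theta_key.
by rewrite cat_cons !theta_key_cons mulTA (mulT_congrr _ IH) !mulTZr.
Qed.

Lemma lin_mulS (a b : SS) F : lin (mulS zeta a b) F =
  lin a (fun ka => lin b (fun kb =>
    al ka.2 kb.2 * chi zeta ka.2 kb.1 * F (ka.1 ++ kb.1, ka.2 + kb.2))).
Proof.
rewrite /mulS lin_allpairs /lin; apply: eq_bigr => x _; rewrite mulr_sumr.
by apply: eq_bigr => y _ /=; ring.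
Qed.

Lemma theta_mul a b : leqv (theta (mulS zeta a b)) (M (theta a) (theta b)).
Proof.
move=> F; rewrite lin_theta lin_mulS lin_mulT lin_theta; apply: eq_lin => ka /=.
under [in RHS]eq_lin => kx do rewrite lin_theta.
rewrite exchange_lin; apply: eq_lin => -[w' h] /=.
by rewrite -lin_mulT; case: ka => w g; rewrite theta_key_mul lin_scaleT.
Qed.

Lemma theta_xS i : leqv (theta (xS C l i)) (X i).
Proof.
move=> F; rewrite lin_theta lin1 mul1r /= lin_mulT.
by apply: eq_lin => -[p g]; rewrite lin1 /= alpha0r yact0r !addr0 !mul1r.
Qed.

Lemma theta_gS g : leqv (theta (gS C g)) (gT C g).
Proof. by move=> F; rewrite lin_theta lin1 mul1r. Qed.

Lemma theta_one : leqv (theta (oneS C n l)) (oneT C n l).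
Proof. by move=> F; rewrite lin_theta lin1 mul1r. Qed.

(** * Theta kills the relations *)

Lemma lin_thetaX_mul (i j : 'I_n) F : lin (M (X i) (X j)) F =
  F (ey i + ey j, 0) - cc j * F (ey i - ey (ordS j), gen l j)
  - cc i * ya (gen l i) (ey j) * F (- ey (ordS i) + ey j, gen l i)
  + cc i * cc j * (al (gen l i) (gen l j) * ya (gen l i) (- ey (ordS j))) *
      F (- ey (ordS i) - ey (ordS j), gen l i + gen l j).
Proof.
rewrite lin_mulT lin_thetaX /= !lin_thetaX /= !alpha0l !alpha0r !yact0l !addr0 !add0r.
by ring.
Qed.

Lemma theta_xx i j : leqv (theta (mulS zeta (xS C l i) (xS C l j))) (M (X i) (X j)).
Proof.
by move=> F; rewrite theta_mul (mulT_congrl _ (theta_xS i)) (mulT_congrr _ (theta_xS j)).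
Qed.

Lemma lin_theta_sub (A B : SS) F :
  lin (theta (A ++ scaleS (-1) B)) F = lin (theta A) F - lin (theta B) F.
Proof. by rewrite theta_cat lin_cat theta_scale lin_scaleT mulN1r. Qed.

Lemma lin_theta_sub_gS (A B : SS) c g F :
  lin (theta (A ++ scaleS (-1) B ++ scaleS c (gS C g))) F =
  lin (theta A) F - lin (theta B) F + c * F (0, g).
Proof.
by rewrite catA theta_cat lin_cat lin_theta_sub theta_scale lin_scaleT theta_gS lin1 mul1r.
Qed.

Lemma theta_rel_adjacent (i : 'I_n) F :
  lin (theta (mulS zeta (xS C l i) (xS C l (ordS i)) ++
    scaleS (-1) (mulS zeta (xS C l (ordS i)) (xS C l i)) ++
    scaleS (- t i) (gS C (gen l i)))) F = 0.
Proof.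
have hS : (ordS i == i) = false := negbTE (ordS_neq i isT).
have hS' : (i == ordS i) = false by rewrite eq_sym.
have hSS : (i == ordS (ordS i)) = false by rewrite eq_sym (negbTE (ordS2_neq i isT)).
rewrite lin_theta_sub_gS !theta_xx !lin_thetaX_mul [al (gen l i) _ * _]commute_gen_coef.
rewrite !yact_ey /yact -!/(yact_exp _ _) !yact_expN !yact_exp_ey /eig -!/(eig_exp _ _).
rewrite !eig_exp_gen !mulrb !eqxx (inj_eq (@ordS_inj _)) hS hS' hSS.
rewrite !subr0 !sub0r ?subrr ?oppr0 zpow0 zpowN1 addNr.
rewrite [ey (ordS i) + ey i]addrC [- ey (ordS (ordS i)) + ey i]addrC.
rewrite [- ey (ordS (ordS i)) - ey (ordS i)]addrC [gen l (ordS i) + gen l i]addrC.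
by field; rewrite zeta_neq0 subr_eq0 zeta_neq1.
Qed.

Lemma theta_rel_distant (i j : 'I_n) F : i != j -> j != ordS i -> i != ordS j ->
  lin (theta (mulS zeta (xS C l i) (xS C l j) ++
    scaleS (-1) (mulS zeta (xS C l j) (xS C l i)))) F = 0.
Proof.
move=> /negbTE hij /negbTE h1 /negbTE h2.
have hji : (j == i) = false by rewrite eq_sym.
have h1' : (ordS i == j) = false by rewrite eq_sym.
rewrite lin_theta_sub !theta_xx !lin_thetaX_mul [al (gen l i) _ * _]commute_gen_coef.
rewrite !yact_ey /yact -!/(yact_exp _ _) !yact_expN !yact_exp_ey /eig -!/(eig_exp _ _).
rewrite !eig_exp_gen !mulrb (inj_eq (@ordS_inj _)) hij hji h1 h1' h2.
rewrite !subrr ?oppr0 zpow0.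
rewrite [ey j + ey i]addrC [- ey (ordS j) + ey i]addrC [- ey (ordS i) + ey j]addrC.
rewrite [- ey (ordS j) - ey (ordS i)]addrC [gen l j + gen l i]addrC.
by ring.
Qed.

Lemma theta_rels r : r \in rels l zeta t -> leqv (theta r) [::].
Proof.
rewrite /rels mem_cat => /orP [/mapP [i _ ->]|/mapP [[i j] hp ->]] F; rewrite lin_nil.
  exact: theta_rel_adjacent.
move: hp; rewrite mem_enum => /andP [d1 dn1]; rewrite /= in d1 dn1.
have [->|hij] := eqVneq i j; first by rewrite lin_theta_sub subrr.
have hi := ltn_ord i; have hj := ltn_ord j.
apply: theta_rel_distant => //; apply/eqP => /(congr1 (@nat_of_ord _)); rewrite ordS_val.
  by case: ifP => /= ? ?; move: d1 dn1; lia.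
by case: ifP => /= ? ?; move: d1 dn1; lia.
Qed.

Definition ideal_sum (s : seq (SS * SS * SS)) : SS :=
  flatten [seq mulS zeta (mulS zeta x.1.1 x.1.2) x.2 | x <- s].

Lemma ideal_sum_cat s1 s2 : ideal_sum (s1 ++ s2) = ideal_sum s1 ++ ideal_sum s2.
Proof. by rewrite /ideal_sum map_cat flatten_cat. Qed.

Lemma theta_ideal_sum s : (forall x, x \in s -> x.1.2 \in rels l zeta t) ->
  leqv (theta (ideal_sum s)) [::].
Proof.
move=> hs F; rewrite lin_theta lin_flatten lin_nil big_seq big1 // => x xs.
rewrite -lin_theta theta_mul (mulT_congrl _ (theta_mul _ _)).
rewrite (mulT_congrl _ (mulT_congrr _ (theta_rels (hs x xs)))).
by rewrite !lin_mulT -[RHS](lin0 (theta x.1.1)); apply: eq_lin => kx; rewrite lin_nil.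
Qed.

Lemma theta_ideal a : inIdeal zeta t a -> leqv (theta a) [::].
Proof.
case=> s [hs /leqvP e] F; rewrite lin_theta e -lin_theta.
exact: theta_ideal_sum.
Qed.

(** * Images of sorted words are linearly independent *)

Definition deg (p : Zn n) : int := \sum_i p i.
Definition weight (w : seq 'I_n) : Zn n := \sum_(i <- w) ey i.

Lemma degD p q : deg (p + q) = deg p + deg q.
Proof. by rewrite /deg -big_split; apply: eq_bigr => i _; rewrite ffunE. Qed.
Lemma degN p : deg (- p) = - deg p.
Proof. by rewrite /deg -sumrN; apply: eq_bigr => i _; rewrite ffunE. Qed.
Lemma deg_ey (i : 'I_n) : deg (ey i) = 1.
Proof.
rewrite /deg (bigD1 i) //= big1 => [|j hj]; first by rewrite ffunE eqxx addr0.
by rewrite ffunE (negbTE hj).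
Qed.
Lemma weight_cons i w : weight (i :: w) = ey i + weight w.
Proof. by rewrite /weight big_cons. Qed.
Lemma deg_weight w : deg (weight w) = (size w)%:Z.
Proof.
elim: w => [|i w IH]; first by rewrite /weight big_nil /deg big1 // => j _; rewrite ffunE.
by rewrite weight_cons degD IH deg_ey /= -[(size w).+1]addn1 PoszD addrC.
Qed.
Lemma weight_count w (k : 'I_n) : weight w k = (count_mem k w)%:Z.
Proof.
elim: w => [|i w IH]; first by rewrite /weight big_nil ffunE.
by rewrite weight_cons ffunE IH ffunE /= PoszD eq_sym.
Qed.

Lemma weight_sorted_inj w w' : sortedw w -> sortedw w' -> weight w = weight w' -> w = w'.
Proof.
move=> s1 s2 e; apply: (sorted_eq (leT := fun a b : 'I_n => (a <= b)%N)) => //.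
- by move=> a b c; apply: leq_trans.
- by move=> a b h; apply: val_inj; apply: anti_leq.
apply/allP => x _; apply/eqP.
by have := congr1 (fun p : Zn n => p x) e; rewrite /= !weight_count => -[].
Qed.

Lemma theta_key_lead w g : exists2 R : TT,
  (forall x, x \in R -> deg x.2.1 < (size w)%:Z) &
  leqv (theta_key (w, g)) ((1, (weight w, g)) :: R).
Proof.
elim: w => [|i w [R hR IH]].
  exists [::] => // F; by rewrite /weight big_nil.
pose G1 (k : TKey n l) := al 0 k.2 * ya 0 k.1.
pose G2 (k : TKey n l) := - cc i * (al (gen l i) k.2 * ya (gen l i) k.1).
pose h1 (k : TKey n l) := (ey i + k.1, 0 + k.2).
pose h2 (k : TKey n l) := (- ey (ordS i) + k.1, gen l i + k.2).
exists ([seq (x.1 * G1 x.2, h1 x.2) | x <- R] ++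
        [seq (x.1 * G2 x.2, h2 x.2) | x <- (1, (weight w, g)) :: R]).
  move=> x; rewrite mem_cat => /orP [/mapP [y yR ->]|/mapP [y yR ->]] /=.
    by rewrite degD deg_ey /= addrC -[(size w).+1]addn1 PoszD ltrD2r hR.
  have hy : deg y.2.1 <= (size w)%:Z.
    by move: yR; rewrite inE => /orP [/eqP -> /=|/hR /ltW //]; rewrite deg_weight.
  by rewrite degD degN deg_ey /= -[(size w).+1]addn1 PoszD addrC ler_ltD.
move=> F; rewrite theta_key_cons lin_mulT lin_thetaX !IH [RHS]lin_cons lin_cat !lin_map.
rewrite [E in E - _]lin_cons -mulNr -linZ addrA.
congr (_ + _ + _); last by apply: eq_lin => k; rewrite /G2 /h2 /=; ring.
by rewrite /= alpha0l yact0l add0r weight_cons !mul1r.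
Qed.

Lemma coef_theta_key w g w' g' : sortedw w -> sortedw w' -> (size w <= size w')%N ->
  coef (theta_key (w, g)) (weight w', g') = ((w, g) == (w', g'))%:R.
Proof.
move=> sw sw' hsz; have [R hR e] := theta_key_lead w g.
rewrite coef_lin e lin_cons /= mul1r.
have -> : lin R (fun k => (k == (weight w', g'))%:R) = 0.
  rewrite /lin big_seq big1 // => x xR.
  suff /negbTE -> : x.2 != (weight w', g') by rewrite mulr0.
  apply/eqP => ex; have := hR x xR; rewrite ex /= deg_weight; lia.
rewrite addr0 xpair_eqE [(w, g) == _]xpair_eqE; congr ((_ && _)%:R).
by apply/eqP/eqP => [/(weight_sorted_inj sw sw')|->].
Qed.

Lemma theta_sorted_free (a : SS) : (forall x, x \in a -> sortedw x.2.1) ->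
  leqv (theta a) [::] -> forall k, coef a k = 0.
Proof.
move=> hs h0.
set U := undup (map snd a).
have uU : uniq U := undup_uniq _.
have aU x : x \in a -> x.2 \in U by move=> xa; rewrite mem_undup map_f.
have sU k : k \in U -> sortedw k.1.
  by rewrite mem_undup => /mapP [x xa ->]; apply: hs.
pose L := [seq k <- U | coef a k != 0].
have [L0 k|] := eqVneq L [::].
  have [kU|kU] := boolP (k \in U).
    have : k \notin L by rewrite L0.
    by rewrite mem_filter kU andbT negbK => /eqP.
  rewrite /coef big_seq_cond big1 //= => x /andP [xa /eqP ex].
  by case/negP: kU; rewrite -ex aU.
(* A longest word with nonzero coefficient keeps its coefficient in Theta a. *)
case/(exists_argmax (fun k : SKey n l => size k.1)) => -[w0 g0] k0L hmax; exfalso.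
move: (k0L); rewrite mem_filter => /andP [hk0 k0U].
move/eqP: hk0; apply.
have := h0 (fun k => (k == (weight w0, g0))%:R).
rewrite lin_nil lin_theta (lin_coef _ uU aU) => <-.
rewrite (bigD1_seq (w0, g0)) //= big_seq_cond big1 ?addr0 => [|[w g] /andP [kU ne]].
  by rewrite -coef_lin coef_theta_key ?eqxx ?mulr1 ?(sU _ k0U).
have [->|hk] := eqVneq (coef a (w, g)) 0; first by rewrite mul0r.
have kL : (w, g) \in L by rewrite mem_filter hk kU.
rewrite -coef_lin coef_theta_key ?(sU _ kU) ?(sU _ k0U) ?(hmax _ kL) //.
by rewrite (negbTE ne) mulr0.
Qed.

(** * Reduction to sorted words modulo the ideal *)

Definition reducible (a : SS) := exists a' s,
  [/\ forall x, x \in a' -> sortedw x.2.1,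
      forall x, x \in s -> x.1.2 \in rels l zeta t
    & leqv a (a' ++ ideal_sum s)].

Lemma reducible_leqv a b : leqv a b -> reducible b -> reducible a.
Proof. by move=> e [a' [s [h1 h2 e']]]; exists a', s; split=> // F; rewrite e e'. Qed.

Lemma reducible_cat a b : reducible a -> reducible b -> reducible (a ++ b).
Proof.
move=> [a1 [s1 [h1 h1' e1]]] [a2 [s2 [h2 h2' e2]]].
exists (a1 ++ a2), (s1 ++ s2); split.
- by move=> x; rewrite mem_cat => /orP [/h1|/h2].
- by move=> x; rewrite mem_cat => /orP [/h1'|/h2'].
by move=> F; rewrite lin_cat e1 e2 ideal_sum_cat !lin_cat; ring.
Qed.

Lemma reducible_nil : reducible [::].
Proof. by exists [::], [::]. Qed.

Lemma reducible_sorted c w g : sortedw w -> reducible [:: (c, (w, g))].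
Proof.
by move=> sw; exists [:: (c, (w, g))], [::]; split=> // x; rewrite inE => /eqP ->.
Qed.

Lemma reducible_ideal U r V : r \in rels l zeta t -> reducible (mulS zeta (mulS zeta U r) V).
Proof.
move=> hr; exists [::], [:: (U, r, V)]; split=> // [x|F]; last by rewrite /ideal_sum /= cats0.
by rewrite inE => /eqP ->.
Qed.

Lemma chi0 w : chi zeta (0 : GG) w = 1.
Proof.
rewrite /chi big1 // => j _; rewrite /eig -/(eig_exp _ _) /eig_exp crd0.
by case: (nat_of_ord j) => [|j']; rewrite ?crd0 subr0 zpow0.
Qed.

Lemma lin_sandwich d u r v g F :
  lin (mulS zeta (mulS zeta [:: (d, (u, 0))] r) [:: (1, (v, g))]) F =
  d * lin r (fun k => al k.2 g * chi zeta k.2 v * F (u ++ k.1 ++ v, k.2 + g)).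
Proof.
rewrite !lin_mulS lin1; congr (_ * _); apply: eq_lin => -[w h] /=.
by rewrite lin1 alpha0l chi0 !add0r catA; ring.
Qed.

Lemma lin_commutator (p q : 'I_n) (G : SKey n l -> C) :
  lin (mulS zeta (xS C l p) (xS C l q) ++ scaleS (-1) (mulS zeta (xS C l q) (xS C l p))) G =
  G ([:: p; q], 0) - G ([:: q; p], 0).
Proof.
rewrite lin_cat lin_scaleS !lin_mulS /= !lin1 /= alpha0l !chi0 addr0.
by ring.
Qed.

Lemma lin_rel_adjacent (i : 'I_n) G :
  lin (mulS zeta (xS C l i) (xS C l (ordS i)) ++
    scaleS (-1) (mulS zeta (xS C l (ordS i)) (xS C l i)) ++
    scaleS (- t i) (gS C (gen l i))) G =
  G ([:: i; ordS i], 0) - G ([:: ordS i; i], 0) - t i * G ([::], gen l i).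
Proof. by rewrite catA lin_cat lin_commutator lin_scaleS lin1 mul1r mulNr. Qed.

Lemma rel_adjacent_in (i : 'I_n) :
  mulS zeta (xS C l i) (xS C l (ordS i)) ++
    scaleS (-1) (mulS zeta (xS C l (ordS i)) (xS C l i)) ++
    scaleS (- t i) (gS C (gen l i)) \in rels l zeta t.
Proof. by rewrite mem_cat; apply/orP; left; apply/mapP; exists i; rewrite ?mem_enum. Qed.

Lemma rel_commutator_in (a b : 'I_n) : (a : nat) != b.+1 ->
  ~~ ((b == 0 :> nat) && (a == n.-1 :> nat)) -> (b < a)%N ->
  mulS zeta (xS C l a) (xS C l b) ++ scaleS (-1) (mulS zeta (xS C l b) (xS C l a))
    \in rels l zeta t.
Proof.
move=> /eqP h1 /nandP h2 hba; rewrite mem_cat; apply/orP; right; apply/mapP.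
have hd : `|(a : int) - (b : int)|%N = (a - b)%N by rewrite distnEl // ltnW.
exists (a, b) => //; rewrite mem_enum inE /= hd.
have := ltn_ord a; have := ltn_ord b.
by move=> ? ?; apply/andP; split; apply/eqP => hd'; case: h2 => /eqP h2; lia.
Qed.

(* If [b, a] is a cyclically adjacent pair [i, i+1], the swap uses
   x_i x_{i+1} - x_{i+1} x_i = t_i g_i and leaves a shorter word; otherwise x_a and x_b commute. *)
Lemma reducible_swap u (a b : 'I_n) v c g : (b < a)%N ->
  reducible [:: (c, (u ++ b :: a :: v, g))] ->
  (forall c' g', reducible [:: (c', (u ++ v, g'))]) ->
  reducible [:: (c, (u ++ a :: b :: v, g))].
Proof.
move=> hba h1 h2; pose V : SS := [:: (1, (v, g))].
have [ea|nea] := eqVneq (a : nat) b.+1.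
  have eS : ordS b = a.
    by apply: ord_inj; have := ltn_ord a; rewrite ordS_val ea; case: ifP => // h; lia.
  pose e := c * t b * al (gen l b) g * chi zeta (gen l b) v.
  have hr := reducible_cat h1 (reducible_cat (h2 (- e) (gen l b + g))
    (reducible_ideal [:: (- c, (u, 0))] V (rel_adjacent_in b))).
  apply: (reducible_leqv _ hr).
  move=> F; rewrite /V lin_cat lin_cat lin_sandwich lin_rel_adjacent eS /= !lin1 /=.
  by rewrite alpha0l chi0 add0r /e; ring.
have [/andP [/eqP eb /eqP ea]|hab] := boolP (((b : nat) == 0%N) && ((a : nat) == n.-1)).
  have eS : ordS a = b by apply: ord_inj; rewrite ordS_val eb ea ltnn.
  pose e := c * t a * al (gen l a) g * chi zeta (gen l a) v.
  have hr := reducible_cat h1 (reducible_cat (h2 e (gen l a + g))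
    (reducible_ideal [:: (c, (u, 0))] V (rel_adjacent_in a))).
  apply: (reducible_leqv _ hr).
  move=> F; rewrite /V lin_cat lin_cat lin_sandwich lin_rel_adjacent eS /= !lin1 /=.
  by rewrite alpha0l chi0 add0r /e; ring.
have hr := reducible_cat h1
  (reducible_ideal [:: (c, (u, 0))] V (rel_commutator_in nea hab hba)).
apply: (reducible_leqv _ hr).
by move=> F; rewrite /V lin_cat lin_sandwich lin_commutator !lin1 /= alpha0l chi0 add0r; ring.
Qed.

Lemma reducible_word c w g : reducible [:: (c, (w, g))].
Proof.
elim: {w}(size w) {-2}w (leqnn (size w)) c g => [|N IHN] w.
  by case: w => // _ c g; apply: reducible_sorted.
elim: {w}(inversions w) {-2}w (erefl (inversions w)) => [|M IHM] w hi hs c g.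
  have [sw|/unsorted_descent [u [a [b [v [ew hba]]]]]] := boolP (sortedw w).
    exact: reducible_sorted.
  by move: hi; rewrite ew inversions_swap.
have [sw|/unsorted_descent [u [a [b [v [ew hba]]]]]] := boolP (sortedw w).
  exact: reducible_sorted.
move: hs hi; rewrite ew inversions_swap // => hs [hi].
apply: reducible_swap => // [|c' g'].
  by apply: IHM => //; move: hs; rewrite !size_cat.
by apply: IHN; move: hs; rewrite !size_cat /=; lia.
Qed.

Lemma reducible_all a : reducible a.
Proof.
elim: a => [|[c [w g]] a IH]; first exact: reducible_nil.
by rewrite -cat1s; apply: reducible_cat => //; apply: reducible_word.
Qed.

Lemma theta_kernel a : leqv (theta a) [::] <-> inIdeal zeta t a.
Proof.
split=> [h0|]; last exact: theta_ideal.
have [a' [s [hs hr e]]] := reducible_all a.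
have ha' : leqv (theta a') [::].
  move=> F; have := h0 F; rewrite !lin_theta e lin_cat -!lin_theta.
  by rewrite (theta_ideal_sum hr) !lin_nil addr0.
exists s; split=> //; apply/leqvP => F.
have a'0 : leqv a' [::].
  by apply/leqvP => k; rewrite (theta_sorted_free hs ha') /coef big_nil.
by rewrite e lin_cat a'0 lin_nil add0r.
Qed.

End Theta.

Theorem proposition1p1 (C : numClosedFieldType) (n l : nat) (zeta : C) (t : 'I_n -> C)
  (hn : (3 <= n)%N) (hl : (2 <= l)%N) (hz : l.-primitive_root zeta) :
  exists Theta : S C n l -> T C n l,
    (forall a b, eqS a b -> eqT (Theta a) (Theta b)) /\
    (forall a b, eqT (Theta (a ++ b)) (Theta a ++ Theta b)) /\
    (forall c a, eqT (Theta (scaleS c a)) (scaleT c (Theta a))) /\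
    (forall a b, eqT (Theta (mulS zeta a b)) (mulT zeta (Theta a) (Theta b))) /\
    eqT (Theta (oneS C n l)) (oneT C n l) /\
    (forall i, eqT (Theta (xS C l i)) (thetaX l zeta t i)) /\
    (forall i, eqT (Theta (gS C (gen l i))) (gT C (gen l i))) /\
    (forall a, eqT (Theta a) [::] <-> inIdeal zeta t a).
Proof.
have [m en] : exists m, n = m.+3 by exists (n - 3)%N; lia.
subst n; exists (theta zeta t).
split; first by move=> a b /leqvP e; apply/leqvP => F; rewrite !lin_theta e.
split; first by move=> a b; rewrite theta_cat.
split; first by move=> c a; apply/leqvP; apply: theta_scale.
split; first by move=> a b; apply/leqvP; apply: theta_mul.
split; first by apply/leqvP; apply: theta_one.
split; first by move=> i; apply/leqvP; apply: theta_xS.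
split; first by move=> i; apply/leqvP; apply: theta_gS.
by move=> a; split=> [/leqvP /(theta_kernel t hl hz) | /(theta_kernel t hl hz) /leqvP].
Qed.
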